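(* There is an $\omega$-regular language that is not recognized by any RPA.
   Context: A Büchi automaton $(Q,\Sigma,q_0,\Delta,F)$ with $\Delta\subseteq Q\times\Sigma\times Q$ accepts an infinite word if it has a run (from $q_0$) visiting $F$ infinitely often; $\omega$-regular languages are those recognized by Büchi automata. A Parikh automaton of dimension $d$ is $\mathcal{A}=(Q,\Sigma,q_0,\Delta,F,C)$ with finite $Q$, $q_0\in Q$, $F\subseteq Q$, finite $\Delta\subseteq Q\times\Sigma\times\mathbb{N}^d\times Q$ and semi-linear $C\subseteq\mathbb{N}^d$ (a finite union of sets $\{b_0+\sum_{j=1}^\ell b_jz_j\mid z_j\in\mathbb{N}\}$, $b_j\in\mathbb{N}^d$). A run on an infinite word $\alpha$ is $r_1r_2\cdots$ with $r_i=(p_{i-1},\alpha_i,\mathbf{v}_i,p_i)\in\Delta$, $p_0=q_0$, and $\rho(r_1\cdots r_i)=\sum_{k\le i}\mathbf{v}_k$. A (synchronous) reachability Parikh automaton (RPA) is such an automaton where the run is accepting if there is $i\ge1$ with $p_i\in F$ and $\rho(r_1\cdots r_i)\in C$; it recognizes the set of infinite words having an accepting run. The transition relation need not be complete. *)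

From Stdlib Require List.
From mathcomp Require Import all_boot.
Set Implicit Arguments. Unset Strict Implicit. Unset Printing Implicit Defensive.

(* Infinite words over Sigma: alpha_{i+1} (paper, 1-indexed) is w i. *)
Definition word (Sigma : finType) := nat -> Sigma.

Record buchi (Sigma : finType) := Buchi {
  b_Q : finType;
  b_q0 : b_Q;
  b_Delta : b_Q -> Sigma -> b_Q -> bool;
  b_F : {set b_Q}
}.

Definition buchi_accepts (Sigma : finType) (B : buchi Sigma) (w : word Sigma) : Prop :=
  exists p : nat -> b_Q B,
    p 0 = @b_q0 _ B /\
    (forall i, @b_Delta _ B (p i) (w i) (p i.+1)) /\
    (forall N, exists i, N <= i /\ p i \in @b_F _ B).

Definition omega_regular (Sigma : finType) (L : word Sigma -> Prop) : Prop :=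
  exists B : buchi Sigma, forall w, L w <-> buchi_accepts B w.

Definition vec (d : nat) := {ffun 'I_d -> nat}.

(* a linear set {b0 + sum_j bs_j z_j | z_j ∈ N} given by (b0, bs) *)
Definition in_linear (d : nat) (L : vec d * seq (vec d)) (v : vec d) : Prop :=
  exists z : nat -> nat,
    forall k : 'I_d,
      v k = L.1 k + \sum_(j < size L.2) z j * (nth L.1 L.2 j) k.

(* a semilinear set: a finite union of linear sets *)
Definition semilinear (d : nat) := seq (vec d * seq (vec d)).

Definition in_semilinear (d : nat) (C : semilinear d) (v : vec d) : Prop :=
  exists2 L, List.In L C & in_linear L v.

Record rpa (Sigma : finType) := RPA {
  r_Q : finType;
  r_d : nat;
  r_q0 : r_Q;
  r_Delta : seq (r_Q * Sigma * vec r_d * r_Q);  (* finite Delta *)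
  r_F : {set r_Q};
  r_C : semilinear r_d
}.

Definition tr_src (Q Sigma : finType) d (t : Q * Sigma * vec d * Q) := t.1.1.1.
Definition tr_let (Q Sigma : finType) d (t : Q * Sigma * vec d * Q) := t.1.1.2.
Definition tr_vec (Q Sigma : finType) d (t : Q * Sigma * vec d * Q) := t.1.2.
Definition tr_tgt (Q Sigma : finType) d (t : Q * Sigma * vec d * Q) := t.2.

(* run r_1 r_2 ... (here r 0, r 1, ...) on w; accepting if for some prefix
   r_1 ... r_i (i >= 1; here r 0 ... r i) the last target is in F and the
   sum of the vectors is in C *)
Definition rpa_accepts (Sigma : finType) (A : rpa Sigma) (w : word Sigma) : Prop :=
  exists r : nat -> (r_Q A * Sigma * vec (r_d A) * r_Q A),
    (forall i, r i \in @r_Delta _ A) /\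
    tr_src (r 0) = @r_q0 _ A /\
    (forall i, tr_let (r i) = w i) /\
    (forall i, tr_tgt (r i) = tr_src (r i.+1)) /\
    (exists i, tr_tgt (r i) \in @r_F _ A /\
       in_semilinear (@r_C _ A)
         [ffun k => \sum_(m < i.+1) tr_vec (r m) k]).

Definition rpa_recognizes (Sigma : finType) (A : rpa Sigma) (L : word Sigma -> Prop) : Prop :=
  forall w, L w <-> rpa_accepts A w.

From mathcomp Require Import all_boot.
From mathcomp Require Import zify.

Set Implicit Arguments.
Unset Strict Implicit.
Unset Printing Implicit Defensive.

(* An RPA decides acceptance at a finite prefix, so its accepting
   runs can be pumped afterwards: on a word with [true] exactly once in every block
   of #|Q| + 1 letters, some state repeats inside the first run of [false]s after
   the accepting position, and looping forever through that repetition yields an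
   accepting run on a word with only finitely many [true]s. *)

Lemma nat_fun_repeat (T : finType) (f : nat -> T) :
  exists k1 k2, k1 < k2 <= #|T| /\ f k1 = f k2.
Proof.
pose g (k : 'I_#|T|.+1) := f k.
have /injectivePn[x [y neq_xy eq_fxy]] : ~~ injectiveb g.
  by apply/injectiveP => /leq_card; rewrite card_ord ltnn.
have [lt_xy | lt_yx | /val_inj eq_xy] := ltngtP x y.
- by exists x, y; rewrite lt_xy -ltnS ltn_ord.
- by exists y, x; rewrite lt_yx -ltnS ltn_ord.
- by rewrite eq_xy eqxx in neq_xy.
Qed.

Definition lasso (s P j : nat) : nat := if j < s then j else s + (j - s) %% P.

Section Lasso.
Variables s P : nat.
Hypothesis P_gt0 : 0 < P.

Lemma lasso_small j : j < s -> lasso s P j = j.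
Proof. by rewrite /lasso => ->. Qed.

Lemma lasso0 : lasso s P 0 = 0.
Proof. by rewrite /lasso; case: ifP; rewrite ?mod0n ?addn0; lia. Qed.

Lemma lasso_loop j : s <= j -> s <= lasso s P j < s + P.
Proof.
by rewrite /lasso leqNgt => /negbTE ->; rewrite leq_addr ltn_add2l ltn_pmod.
Qed.

Lemma lassoS j :
  lasso s P j.+1 = (lasso s P j).+1 \/
  (lasso s P j).+1 = s + P /\ lasso s P j.+1 = s.
Proof.
rewrite /lasso; have [lt_js | le_sj] := ltnP j s.
  left; case: ltnP => // le_sSj.
  have -> : j.+1 = s by lia.
  by rewrite subnn mod0n addn0.
rewrite ltnNge (leqW le_sj) /= subSn // -addn1 -modnDml addn1.
have := ltn_pmod (j - s) P_gt0; rewrite leq_eqVlt => /orP[/eqP loop_end | lt_P].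
  by right; rewrite loop_end modnn addn0 -addnS loop_end.
by left; rewrite modn_small // addnS.
Qed.

Lemma lasso_link (X Y : Type) (src tgt : X -> Y) (r : nat -> X) :
  (forall j, tgt (r j) = src (r j.+1)) -> src (r (s + P)) = src (r s) ->
  forall j, tgt (r (lasso s P j)) = src (r (lasso s P j.+1)).
Proof.
move=> link loop j; have [-> | [loop_end ->]] := lassoS j; first exact: link.
by rewrite link loop_end loop.
Qed.

End Lasso.

Section RPARuns.
Variables (Sigma : finType) (A : rpa Sigma).

Definition rpa_run (w : word Sigma) (r : nat -> r_Q A * Sigma * vec (r_d A) * r_Q A) :=
  [/\ forall j, r j \in r_Delta A, tr_src (r 0) = r_q0 A,
      forall j, tr_let (r j) = w j & forall j, tr_tgt (r j) = tr_src (r j.+1)].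

Definition rpa_accepting_prefix (r : nat -> r_Q A * Sigma * vec (r_d A) * r_Q A) i :=
  tr_tgt (r i) \in r_F A /\
  in_semilinear (r_C A) [ffun k => \sum_(m < i.+1) tr_vec (r m) k].

Lemma rpa_acceptsP w :
  rpa_accepts A w <-> exists r i, rpa_run w r /\ rpa_accepting_prefix r i.
Proof.
split=> [[r [D [r0 [lt [link [i acc]]]]]] | [r [i [[D r0 lt link] acc]]]].
  by exists r, i.
by exists r; do 4!split=> //; exists i.
Qed.

Lemma eq_rpa_accepting_prefix r r' i :
  (forall m, m <= i -> r' m = r m) ->
  rpa_accepting_prefix r i -> rpa_accepting_prefix r' i.
Proof.
move=> eq_rr' [F_i C_i]; split; first by rewrite eq_rr'.
suff -> : [ffun k => \sum_(m < i.+1) tr_vec (r' m) k] =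
          [ffun k => \sum_(m < i.+1) tr_vec (r m) k] by [].
by apply/ffunP => k; rewrite !ffunE; apply: eq_bigr => m _; rewrite eq_rr' // -ltnS.
Qed.

Lemma rpa_run_lasso w r s P : 0 < P ->
  tr_src (r (s + P)) = tr_src (r s) ->
  rpa_run w r -> rpa_run (w \o lasso s P) (r \o lasso s P).
Proof.
move=> P_gt0 loop [D r0 lt link]; split=> //= [|j].
  by rewrite lasso0.
exact: lasso_link.
Qed.

Lemma rpa_accepts_lasso w r i s P : 0 < P -> i < s ->
  tr_src (r (s + P)) = tr_src (r s) ->
  rpa_run w r -> rpa_accepting_prefix r i -> rpa_accepts A (w \o lasso s P).
Proof.
move=> P_gt0 lt_is loop run acc; apply/rpa_acceptsP.
exists (r \o lasso s P), i; split; first exact: rpa_run_lasso.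
by apply: eq_rpa_accepting_prefix acc => m le_mi /=; rewrite lasso_small //; lia.
Qed.

End RPARuns.

Definition infinitely_many_true (w : word bool) : Prop :=
  forall N, exists2 n, N <= n & w n.

Lemma infinitely_many_true_regular : omega_regular infinitely_many_true.
Proof.
exists (@Buchi bool bool false (fun _ c q => q == c) [set true]) => w; split.
  move=> inf_w; exists (fun i => if i is j.+1 then w j else false).
  split=> //; split=> [i /= // | N]; have [n le_Nn w_n] := inf_w N.
  by exists n.+1; rewrite inE w_n; split=> //; lia.
move=> [p [_ [step inf_p]]] N; have [[|i] [le_Ni]] := inf_p N.+1; first lia.
by rewrite inE (eqP (step i)) => /eqP w_i; exists i.
Qed.

Lemma infinitely_many_true_lasso w s P : 0 < P ->
  infinitely_many_true (w \o lasso s P) -> exists2 n, s <= n < s + P & w n.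
Proof.
move=> P_gt0 inf_w; have [j le_sj w_j] := inf_w s.
by exists (lasso s P j) => //; apply: lasso_loop.
Qed.

Definition sparse_word (N : nat) : word bool := fun n => n %% N.+1 == N.

Lemma sparse_word_infinitely_many_true N : infinitely_many_true (sparse_word N).
Proof.
move=> M; exists (M * N.+1 + N); first lia.
by rewrite /sparse_word modnMDl modn_small.
Qed.

Lemma sparse_word_block b N k : k < N -> sparse_word N (b * N.+1 + k) = false.
Proof.
by move=> lt_kN; rewrite /sparse_word modnMDl modn_small ?(ltn_eqF lt_kN) //; lia.
Qed.

Lemma infinitely_many_true_not_rpa (A : rpa bool) :
  ~ rpa_recognizes A infinitely_many_true.
Proof.
move=> recA; set N := #|r_Q A|.
have /rpa_acceptsP[r [i [run acc]]] :=
  (recA (sparse_word N)).1 (sparse_word_infinitely_many_true N).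
set s0 := i.+1 * N.+1.
have [k1 [k2 [/andP[lt_k12 le_k2N] loop]]] :=
  nat_fun_repeat (fun k => tr_src (r (s0 + k))).
set s := s0 + k1; set P := k2 - k1.
have P_gt0 : 0 < P by lia.
have lt_is : i < s by rewrite /s /s0; lia.
have {}loop : tr_src (r (s + P)) = tr_src (r s) by rewrite -addnA subnKC // ltnW.
have inf_pumped := (recA _).2 (rpa_accepts_lasso P_gt0 lt_is loop run acc).
have [n /andP[le_sn lt_n]] := infinitely_many_true_lasso P_gt0 inf_pumped.
by rewrite -(subnKC (leq_trans (leq_addr k1 s0) le_sn)) sparse_word_block //; lia.
Qed.

Theorem lemma1 :
  exists (Sigma : finType) (L : word Sigma -> Prop),
    omega_regular L /\ forall A : rpa Sigma, ~ rpa_recognizes A L.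
Proof.
exists bool, infinitely_many_true; split.
  exact: infinitely_many_true_regular.
exact: infinitely_many_true_not_rpa.
Qed.
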